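(* Let $\mathcal{X},\mathcal{Y}\in\mathbb{R}^{d\times n}$, let $\mathcal{Y}^{T}\mathcal{X}=U\Sigma V^{T}$ be a singular value decomposition (with $U,V\in\mathbb{R}^{n\times n}$ orthogonal and $\Sigma$ diagonal with nonnegative entries), and set $Q^\ast=UV^{T}$ and $\mathcal{Y}_h=\mathcal{Y}Q^\ast$. Let $\mathcal{P}_n$ be the set of $n\times n$ permutation matrices. Then: (i) $Q^\ast$ minimizes $\|\mathcal{X}-\mathcal{Y}Q\|_F$ over all orthogonal $n\times n$ matrices $Q$, and hence $\|\mathcal{X}-\mathcal{Y}_h\|_F\le \min_{T\in\mathcal{P}_n}\|\mathcal{X}-\mathcal{Y}T\|_F$; (ii) the identity matrix $I_n$ minimizes $\|\mathcal{X}-\mathcal{Y}_hT\|_F$ over $T\in\mathcal{P}_n$.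
   Context: $\|\cdot\|_F$ is the Frobenius norm. A permutation matrix is a matrix $T\in\{0,1\}^{n\times n}$ with every row sum and every column sum equal to $1$. *)

From mathcomp Require Import all_boot all_order all_algebra.
Set Implicit Arguments. Unset Strict Implicit. Unset Printing Implicit Defensive.
Import Order.TTheory GRing.Theory Num.Theory.
Local Open Scope ring_scope.

Definition frobenius_norm (R : rcfType) (m n : nat) (A : 'M[R]_(m, n)) : R :=
  Num.sqrt (\sum_(i < m) \sum_(j < n) A i j ^+ 2).

Definition orthogonal_mx (R : rcfType) (n : nat) (Q : 'M[R]_n) : Prop :=
  Q^T *m Q = 1%:M.

Definition permutation_matrix (R : rcfType) (n : nat) (T : 'M[R]_n) : Prop :=
  (forall i j, T i j = 0 \/ T i j = 1) /\
  (forall i, \sum_(j < n) T i j = 1) /\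
  (forall j, \sum_(i < n) T i j = 1).

From mathcomp Require Import all_boot all_order all_algebra.
From mathcomp Require Import lra.
Set Implicit Arguments. Unset Strict Implicit. Unset Printing Implicit Defensive.
Import Order.TTheory GRing.Theory Num.Theory.
Local Open Scope ring_scope.

(* For orthogonal Q, ||A - B Q||_F^2 = ||A||_F^2 + ||B||_F^2 - 2 tr(Q^T B^T A),
   so minimising the distance means maximising the trace term.  With
   B^T A = U diag(s) V^T this term is tr(W diag(s)) for the orthogonal
   W = V^T Q^T U, whose diagonal entries are at most 1; hence it is at most
   sum s, with equality for Q = U V^T.  Permutation matrices are orthogonal,
   which gives the second claim.  For (ii), Y_h^T X = V diag(s) V^T is again
   an SVD, whose optimal rotation is V V^T = I. *)

Section Procrustes.
Variable R : rcfType.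

Lemma orthogonal_mx_mulmxT n (Q : 'M[R]_n) : orthogonal_mx Q -> Q *m Q^T = 1%:M.
Proof. exact: mulmx1C. Qed.

Lemma orthogonal_mx_tr n (Q : 'M[R]_n) : orthogonal_mx Q -> orthogonal_mx Q^T.
Proof. by move=> hQ; rewrite /orthogonal_mx trmxK orthogonal_mx_mulmxT. Qed.

Lemma orthogonal_mx_mul n (P Q : 'M[R]_n) :
  orthogonal_mx P -> orthogonal_mx Q -> orthogonal_mx (P *m Q).
Proof.
move=> hP hQ.
by rewrite /orthogonal_mx trmx_mul mulmxA -(mulmxA Q^T) hP mulmx1 hQ.
Qed.

Lemma orthogonal_mx_diag_le1 n (W : 'M[R]_n) :
  orthogonal_mx W -> forall i, W i i <= 1.
Proof.
move=> hW i.
have col_norm : \sum_k W k i ^+ 2 = 1.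
  have := congr1 (fun M : 'M[R]_n => M i i) hW; rewrite !mxE eqxx /= => ii_entry.
  rewrite -[RHS]ii_entry.
  by apply: eq_bigr => k _; rewrite !mxE expr2.
have rest_ge0 : 0 <= \sum_(k | k != i) W k i ^+ 2.
  by apply: sumr_ge0 => k _; apply: sqr_ge0.
move: col_norm; rewrite (bigD1 i) //=; nra.
Qed.

Lemma mxtrace_orthogonal_diag_le n (W : 'M[R]_n) (s : 'rV[R]_n) :
  orthogonal_mx W -> (forall j, 0 <= s 0 j) ->
  \tr (W *m diag_mx s) <= \sum_j s 0 j.
Proof.
move=> hW hs; rewrite mul_mx_diag /mxtrace; apply: ler_sum => j _; rewrite mxE.
have := orthogonal_mx_diag_le1 hW j; have := hs j; nra.
Qed.

Lemma permutation_matrix_orthogonal n (T : 'M[R]_n) :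
  permutation_matrix T -> orthogonal_mx T.
Proof.
move=> [T01 [row_sum col_sum]]; apply/matrixP => i j; rewrite !mxE.
case: eqP => [<- | /eqP neq_ij].
  rewrite -(col_sum i) /=; apply: eq_bigr => k _; rewrite mxE.
  by case: (T01 k i) => ->; rewrite ?mulr0 ?mulr1.
apply: big1 => k _; rewrite mxE.
have : T k i + T k j <= 1.
  rewrite -(row_sum k) (bigD1 i) //= (bigD1 j) 1?eq_sym //= addrA lerDl.
  by apply: sumr_ge0 => l _; case: (T01 k l) => ->.
by case: (T01 k i) => ->; case: (T01 k j) => ->;
  rewrite ?mulr0 ?mul0r ?mulr1 //; lra.
Qed.

Lemma sumsq_mxtrace m n (A : 'M[R]_(m, n)) :
  \sum_(i < m) \sum_(j < n) A i j ^+ 2 = \tr (A^T *m A).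
Proof.
rewrite /mxtrace exchange_big; apply: eq_bigr => j _; rewrite mxE.
by apply: eq_bigr => i _; rewrite !mxE expr2.
Qed.

Lemma mxtrace_sqr_sub_orthogonal d n (A B : 'M[R]_(d, n)) (Q : 'M[R]_n) :
  orthogonal_mx Q ->
  \tr ((A - B *m Q)^T *m (A - B *m Q)) =
  \tr (A^T *m A) + \tr (B^T *m B) - 2 * \tr (Q^T *m (B^T *m A)).
Proof.
move=> hQ.
have cross : \tr (A^T *m (B *m Q)) = \tr (Q^T *m (B^T *m A)).
  by rewrite -mxtrace_tr !trmx_mul trmxK mulmxA.
have BQ_sqr : \tr (Q^T *m B^T *m (B *m Q)) = \tr (B^T *m B).
  rewrite mxtrace_mulC !mulmxA -(mulmxA B Q) orthogonal_mx_mulmxT //.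
  by rewrite mulmx1 mxtrace_mulC.
have -> : (A - B *m Q)^T = A^T - Q^T *m B^T by rewrite linearB /= trmx_mul.
rewrite mulmxBl !mulmxBr !linearB /= cross BQ_sqr mulmxA.
lra.
Qed.

Lemma frobenius_norm_sub_orthogonal_le d n (A B : 'M[R]_(d, n)) (Q1 Q2 : 'M[R]_n) :
  orthogonal_mx Q1 -> orthogonal_mx Q2 ->
  \tr (Q2^T *m (B^T *m A)) <= \tr (Q1^T *m (B^T *m A)) ->
  frobenius_norm (A - B *m Q1) <= frobenius_norm (A - B *m Q2).
Proof.
move=> hQ1 hQ2 le_tr; rewrite /frobenius_norm ler_sqrt; last first.
  by do 2!apply: sumr_ge0 => ? _; apply: sqr_ge0.
by rewrite !sumsq_mxtrace !mxtrace_sqr_sub_orthogonal //; lra.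
Qed.

Lemma procrustes d n (A B : 'M[R]_(d, n)) (U V : 'M[R]_n) (s : 'rV[R]_n) :
  orthogonal_mx U -> orthogonal_mx V -> (forall j, 0 <= s 0 j) ->
  B^T *m A = U *m diag_mx s *m V^T ->
  forall Q : 'M[R]_n, orthogonal_mx Q ->
    frobenius_norm (A - B *m (U *m V^T)) <= frobenius_norm (A - B *m Q).
Proof.
move=> hU hV hs svd Q hQ.
apply: frobenius_norm_sub_orthogonal_le => //.
  by apply: orthogonal_mx_mul => //; apply: orthogonal_mx_tr.
have -> : \tr ((U *m V^T)^T *m (B^T *m A)) = \sum_j s 0 j.
  rewrite svd trmx_mul trmxK -!mulmxA (mulmxA U^T) hU mul1mx.
  by rewrite mxtrace_mulC -mulmxA hV mulmx1 mxtrace_diag.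
have -> : \tr (Q^T *m (B^T *m A)) = \tr ((V^T *m Q^T *m U) *m diag_mx s).
  by rewrite svd !mulmxA mxtrace_mulC !mulmxA.
apply: mxtrace_orthogonal_diag_le => //.
by do !apply: orthogonal_mx_mul => //; apply: orthogonal_mx_tr.
Qed.

End Procrustes.

Theorem mainTheorem2 (R : rcfType) (d n : nat) (X Y : 'M[R]_(d, n))
    (U V : 'M[R]_n) (s : 'rV[R]_n) :
  orthogonal_mx U -> orthogonal_mx V ->
  (forall j, 0 <= s 0 j) ->
  Y^T *m X = U *m diag_mx s *m V^T ->
  let Qstar := U *m V^T in
  let Yh := Y *m Qstar in
  (forall Q : 'M[R]_n, orthogonal_mx Q ->
     frobenius_norm (X - Y *m Qstar) <= frobenius_norm (X - Y *m Q)) /\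
  (forall T : 'M[R]_n, permutation_matrix T ->
     frobenius_norm (X - Yh) <= frobenius_norm (X - Y *m T)) /\
  (forall T : 'M[R]_n, permutation_matrix T ->
     frobenius_norm (X - Yh *m 1%:M) <= frobenius_norm (X - Yh *m T)).
Proof.
move=> hU hV hs svd Qstar Yh.
have optimal := procrustes hU hV hs svd.
have svd_h : Yh^T *m X = V *m diag_mx s *m V^T.
  rewrite /Yh /Qstar !trmx_mul trmxK -!mulmxA svd !mulmxA.
  by rewrite -(mulmxA V) hU mulmx1.
split; first exact: optimal.
split=> T /permutation_matrix_orthogonal hT; first exact: optimal.
by rewrite -(orthogonal_mx_mulmxT hV); apply: (procrustes hV hV hs svd_h).
Qed.
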